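(* Let $\triangle ABC$ have side lengths $a=|BC|>b=|CA|>c=|AB|$ and angles $\alpha=\angle A$, $\beta=\angle B$, $\gamma=\angle C$, and suppose $60^\circ\le\beta<80^\circ$, $60^\circ<\alpha<90^\circ$, and $\alpha+\beta/2<120^\circ$. For $x\in\{a,b,c\}$ let $W_x$ denote the largest area of an equilateral triangle contained in the closed triangle $\triangle ABC$ having one of its sides lying on side $x$. Then the maximum of $W_a,W_b,W_c$ is attained on the short side $c$, and the minimum is attained on the middle side $b$.
   Context: An equilateral triangle of largest area contained in $\triangle ABC$ with one side lying on a given side of $\triangle ABC$ is called the wedged equilateral triangle (WET) on that side; it need not have all three vertices on the boundary of $\triangle ABC$. The max (resp. min) WET is the one of largest (resp. smallest) area among the three sides. *)

From Stdlib Require Import Reals Lra.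
Open Scope R_scope.

Definition pt := (R * R)%type.

Definition pdist (P Q : pt) : R :=
  sqrt ((fst P - fst Q) ^ 2 + (snd P - snd Q) ^ 2).

(* twice the signed area of triangle PQR *)
Definition det3 (P Q S : pt) : R :=
  (fst Q - fst P) * (snd S - snd P) - (snd Q - snd P) * (fst S - fst P).

Definition area (P Q S : pt) : R := Rabs (det3 P Q S) / 2.

Definition angle (V P Q : pt) : R :=
  acos (((fst P - fst V) * (fst Q - fst V) + (snd P - snd V) * (snd Q - snd V))
        / (pdist V P * pdist V Q)).

Definition on_seg (X Y M : pt) : Prop :=
  exists t, 0 <= t <= 1 /\
    M = ((1 - t) * fst X + t * fst Y, (1 - t) * snd X + t * snd Y).

Definition in_tri (A B C M : pt) : Prop :=
  exists u v w, 0 <= u /\ 0 <= v /\ 0 <= w /\ u + v + w = 1 /\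
    M = (u * fst A + v * fst B + w * fst C, u * snd A + v * snd B + w * snd C).

Definition equilateral (P Q S : pt) : Prop :=
  P <> Q /\ pdist P Q = pdist Q S /\ pdist Q S = pdist S P.

Definition wedged (A B C X Y P Q S : pt) : Prop :=
  equilateral P Q S /\
  (forall M, in_tri P Q S M -> in_tri A B C M) /\
  (forall M, on_seg P Q M -> on_seg X Y M).

Definition is_WET_area (A B C X Y : pt) (w : R) : Prop :=
  (exists P Q S, wedged A B C X Y P Q S /\ area P Q S = w) /\
  (forall P Q S, wedged A B C X Y P Q S -> area P Q S <= w).

From Stdlib Require Import Reals Lra Psatz.
Open Scope R_scope.

(* Put the base PQ of an equilateral triangle on a side OY of a triangle OYZ at
   the parameters p < q of OY.  The triangle is wedged iff its apex S lies in OYZ,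
   and the two sign conditions "S is on Z's side of OY" and "S is on Y's side of OZ"
   force (q - p) (|D| + sqrt 3 g) <= 2 |D|, where D = det3 O Y Z and
   g = |OY| |OZ| cos O.  Hence the WET on OY is the whole side when both base angles
   are at least 60 degrees, and has side t |OY| with t = 2 |D| / (|D| + sqrt 3 g)
   when the angle at O is at most 60 degrees and the angle at Y at least 60 degrees.

   In the theorem, the angle sum gives gamma = 180 - alpha - beta < 60 <= alpha, beta.
   So W_c is the whole side c, while W_a and W_b are both of the second kind, with
   the same ratio t coming from the angle at C: W_b <= W_a because b < a, and
   W_a <= W_c amounts to t a <= c, i.e. sin alpha <= sin (gamma + 60), which holds
   because alpha + beta / 2 < 120. *)

Definition sqdist (P Q : pt) : R := (fst P - fst Q) ^ 2 + (snd P - snd Q) ^ 2.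

Definition dot3 (V P Q : pt) : R :=
  (fst P - fst V) * (fst Q - fst V) + (snd P - snd V) * (snd Q - snd V).

Definition pt_on (X Y : pt) (t : R) : pt :=
  ((1 - t) * fst X + t * fst Y, (1 - t) * snd X + t * snd Y).

(* The midpoint of PQ moved by k times PQ turned by a right angle; for
   k = +-sqrt 3 / 2 these are the two apexes of equilateral triangles on PQ. *)
Definition apex (P Q : pt) (k : R) : pt :=
  ((fst P + fst Q) / 2 - k * (snd Q - snd P), (snd P + snd Q) / 2 + k * (fst Q - fst P)).

Lemma sqrt3_pos : 0 < sqrt 3.
Proof. apply sqrt_lt_R0; lra. Qed.

Lemma sqrt3_sqr : sqrt 3 * sqrt 3 = 3.
Proof. apply sqrt_sqrt; lra. Qed.

Lemma Rabs_sqr_eq (x : R) : Rabs x * Rabs x = x * x.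
Proof. rewrite <- Rabs_mult; apply Rabs_pos_eq, Rle_0_sqr. Qed.

Lemma Rabs_half_sqrt3 (k : R) : k * k = 3 / 4 -> Rabs k = sqrt 3 / 2.
Proof.
  intros Hk. pose proof sqrt3_pos; pose proof sqrt3_sqr; pose proof (Rabs_pos k).
  pose proof (Rabs_sqr_eq k). nra.
Qed.

Lemma sqdist_ge0 (P Q : pt) : 0 <= sqdist P Q.
Proof. unfold sqdist; apply Rplus_le_le_0_compat; apply pow2_ge_0. Qed.

Lemma sqdist_sym (P Q : pt) : sqdist P Q = sqdist Q P.
Proof. unfold sqdist; ring. Qed.

Lemma sqdist_pos (P Q : pt) : P <> Q -> 0 < sqdist P Q.
Proof.
  intros Hne. destruct (Rle_lt_or_eq_dec _ _ (sqdist_ge0 P Q)) as [|E]; [assumption|].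
  exfalso; apply Hne. destruct P as [px py], Q as [qx qy].
  unfold sqdist in E; cbn [fst snd] in E.
  pose proof (pow2_ge_0 (px - qx)); pose proof (pow2_ge_0 (py - qy)).
  f_equal; [cut (px - qx = 0) | cut (py - qy = 0)]; try lra;
    apply Rsqr_0_uniq; unfold Rsqr; nra.
Qed.

Lemma pdist_sym (P Q : pt) : pdist P Q = pdist Q P.
Proof. unfold pdist; f_equal; ring. Qed.

Lemma pdist_sqr (P Q : pt) : pdist P Q * pdist P Q = sqdist P Q.
Proof. apply sqrt_sqrt, sqdist_ge0. Qed.

Lemma sqdist_le_scaled (t : R) (P Q P' Q' : pt) :
  0 <= t -> t * pdist P Q <= pdist P' Q' -> t ^ 2 * sqdist P Q <= sqdist P' Q'.
Proof.
  intros Ht H. rewrite <- !pdist_sqr.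
  assert (0 <= t * pdist P Q) by (apply Rmult_le_pos; [exact Ht | apply sqrt_pos]).
  replace (t ^ 2 * (pdist P Q * pdist P Q)) with (t * pdist P Q * (t * pdist P Q)) by ring.
  apply Rmult_le_compat; assumption.
Qed.

Lemma det3_rotate (P Q S : pt) : det3 Q S P = det3 P Q S.
Proof. unfold det3; ring. Qed.

Lemma det3_rotate2 (P Q S : pt) : det3 S P Q = det3 P Q S.
Proof. unfold det3; ring. Qed.

Lemma det3_swap (P Q S : pt) : det3 P S Q = - det3 P Q S.
Proof. unfold det3; ring. Qed.

Lemma det3_split (O Y Z S : pt) : det3 S Y Z = det3 O Y Z - det3 O Y S - det3 O S Z.
Proof. unfold det3; ring. Qed.

Lemma dot3_swap (V P Q : pt) : dot3 V Q P = dot3 V P Q.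
Proof. unfold dot3; ring. Qed.

Lemma sqdist_sub_dot3 (P Q S : pt) : sqdist P Q - dot3 P Q S = dot3 Q P S.
Proof. unfold sqdist, dot3; ring. Qed.

Lemma lagrange_det3_dot3 (V P Q : pt) :
  det3 V P Q ^ 2 + dot3 V P Q ^ 2 = sqdist V P * sqdist V Q.
Proof. unfold det3, dot3, sqdist; ring. Qed.

Lemma sqdist_pos_of_det3 (V P Q : pt) : det3 V P Q <> 0 -> 0 < sqdist V P.
Proof. intros HD. apply sqdist_pos. intros <-. apply HD. unfold det3; ring. Qed.

Lemma pdist_pos_of_det3 (V P Q : pt) : det3 V P Q <> 0 -> 0 < pdist V P.
Proof. intros HD. apply sqrt_lt_R0, (sqdist_pos_of_det3 V P Q HD). Qed.

Lemma equilateral_sqdist (P Q S : pt) :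
  equilateral P Q S -> sqdist P Q = sqdist Q S /\ sqdist Q S = sqdist S P.
Proof. intros [_ [E1 E2]]. rewrite <- !pdist_sqr, E1, E2. split; reflexivity. Qed.

Lemma equilateral_apex (P Q S : pt) :
  equilateral P Q S -> exists k, k * k = 3 / 4 /\ S = apex P Q k.
Proof.
  intros He. destruct (equilateral_sqdist P Q S He) as [E1 E2].
  pose proof (sqdist_pos P Q (proj1 He)) as HL.
  set (L := sqdist P Q) in *.
  assert (Hdot : dot3 P Q S = L / 2).
  { assert (sqdist Q S = L + sqdist S P - 2 * dot3 P Q S) by (unfold L, sqdist, dot3; ring).
    lra. }
  assert (Hdet : det3 P Q S ^ 2 = 3 / 4 * (L * L)).
  { pose proof (lagrange_det3_dot3 P Q S) as Lg.
    rewrite (sqdist_sym P S), <- E2, <- E1, Hdot in Lg. fold L in Lg. lra. }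
  exists (det3 P Q S / L). split.
  - apply (Rmult_eq_reg_r (L * L)); [|nra].
    transitivity (det3 P Q S ^ 2); [field; lra | rewrite Hdet; ring].
  - assert (Ix : L * (fst S - fst P) =
                 dot3 P Q S * (fst Q - fst P) - det3 P Q S * (snd Q - snd P))
      by (unfold L, sqdist, dot3, det3; ring).
    assert (Iy : L * (snd S - snd P) =
                 dot3 P Q S * (snd Q - snd P) + det3 P Q S * (fst Q - fst P))
      by (unfold L, sqdist, dot3, det3; ring).
    rewrite Hdot in Ix, Iy. destruct S as [sx sy]. unfold apex; cbn [fst snd] in *.
    f_equal; apply (Rmult_eq_reg_l L); try lra.
    + replace (L * sx) with (L * fst P + L * (sx - fst P)) by ring. rewrite Ix. field. lra.
    + replace (L * sy) with (L * snd P + L * (sy - snd P)) by ring. rewrite Iy. field. lra.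
Qed.

Lemma apex_equilateral (P Q : pt) (k : R) :
  P <> Q -> k * k = 3 / 4 -> equilateral P Q (apex P Q k).
Proof.
  intros Hne Hk.
  assert (E1 : sqdist Q (apex P Q k) = sqdist P Q)
    by (transitivity ((1 / 4 + k * k) * sqdist P Q);
        [unfold sqdist, apex; simpl; field | rewrite Hk; lra]).
  assert (E2 : sqdist (apex P Q k) P = sqdist P Q)
    by (transitivity ((1 / 4 + k * k) * sqdist P Q);
        [unfold sqdist, apex; simpl; field | rewrite Hk; lra]).
  unfold equilateral, pdist. fold (sqdist P Q) (sqdist Q (apex P Q k)) (sqdist (apex P Q k) P).
  rewrite E1, E2. auto.
Qed.

Lemma det3_apex (P Q : pt) (k : R) : det3 P Q (apex P Q k) = k * sqdist P Q.
Proof. unfold det3, apex, sqdist; simpl; field. Qed.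

Lemma area_equilateral (P Q S : pt) :
  equilateral P Q S -> area P Q S = sqrt 3 / 4 * sqdist P Q.
Proof.
  intros He. destruct (equilateral_apex P Q S He) as [k [Hk ->]].
  unfold area. rewrite det3_apex, Rabs_mult, (Rabs_half_sqrt3 k Hk),
    (Rabs_pos_eq _ (sqdist_ge0 P Q)). field.
Qed.

Lemma on_seg_rev (X Y M : pt) : on_seg X Y M <-> on_seg Y X M.
Proof. split; intros [t [Ht ->]]; exists (1 - t); split; try lra; f_equal; ring. Qed.

Lemma in_tri_rotate (A B C M : pt) : in_tri A B C M <-> in_tri B C A M.
Proof.
  split; intros (u & v & w & Hu & Hv & Hw & Hs & ->).
  - exists v, w, u. repeat split; try lra. f_equal; ring.
  - exists w, u, v. repeat split; try lra. f_equal; ring.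
Qed.

Lemma in_tri_rev (A B C M : pt) : in_tri A B C M <-> in_tri C B A M.
Proof.
  split; intros (u & v & w & Hu & Hv & Hw & Hs & ->);
    exists w, v, u; repeat split; try lra; f_equal; ring.
Qed.

Lemma on_seg_left (X Y : pt) : on_seg X Y X.
Proof. exists 0. split; [lra|]. destruct X; f_equal; simpl; ring. Qed.

Lemma on_seg_right (X Y : pt) : on_seg X Y Y.
Proof. exists 1. split; [lra|]. destruct Y; f_equal; simpl; ring. Qed.

Lemma in_tri_third (A B C : pt) : in_tri A B C C.
Proof. exists 0, 0, 1. repeat split; try lra. destruct C; f_equal; simpl; ring. Qed.

Lemma in_tri_of_on_seg (O Y Z M : pt) : on_seg O Y M -> in_tri O Y Z M.
Proof.
  intros [t [Ht ->]]. exists (1 - t), t, 0. repeat split; try lra. f_equal; ring.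
Qed.

Lemma on_seg_convex (X Y P Q M : pt) :
  on_seg X Y P -> on_seg X Y Q -> on_seg P Q M -> on_seg X Y M.
Proof.
  intros [p [Hp ->]] [q [Hq ->]] [t [Ht ->]].
  exists ((1 - t) * p + t * q). split; [nra|]. simpl. f_equal; ring.
Qed.

Lemma in_tri_convex (A B C P Q S M : pt) :
  in_tri A B C P -> in_tri A B C Q -> in_tri A B C S -> in_tri P Q S M -> in_tri A B C M.
Proof.
  intros (u1 & v1 & w1 & Hu1 & Hv1 & Hw1 & Hs1 & ->)
         (u2 & v2 & w2 & Hu2 & Hv2 & Hw2 & Hs2 & ->)
         (u3 & v3 & w3 & Hu3 & Hv3 & Hw3 & Hs3 & ->)
         (u & v & w & Hu & Hv & Hw & Hs & ->).
  exists (u * u1 + v * u2 + w * u3), (u * v1 + v * v2 + w * v3), (u * w1 + v * w2 + w * w3).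
  repeat split; try nra. simpl. f_equal; ring.
Qed.

Lemma in_tri_det3 (O Y Z S : pt) : in_tri O Y Z S -> 0 <= det3 O Y S * det3 O Y Z.
Proof.
  intros (u & v & w & Hu & Hv & Hw & Hs & ->).
  replace (det3 O Y _) with (w * det3 O Y Z).
  - pose proof (Rle_0_sqr (det3 O Y Z)); unfold Rsqr in *; nra.
  - replace u with (1 - v - w) by lra. unfold det3; simpl; ring.
Qed.

(* The barycentric coordinates are ratios of signed areas. *)
Lemma in_tri_of_det3 (O Y Z S : pt) : det3 O Y Z <> 0 ->
  0 <= det3 S Y Z * det3 O Y Z -> 0 <= det3 O S Z * det3 O Y Z ->
  0 <= det3 O Y S * det3 O Y Z -> in_tri O Y Z S.
Proof.
  intros HD Hu Hv Hw. set (D := det3 O Y Z) in *.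
  assert (HDD : 0 < D * D) by (destruct (Rlt_or_le D 0); nra).
  exists (det3 S Y Z / D), (det3 O S Z / D), (det3 O Y S / D).
  repeat split.
  1-3: apply (Rmult_le_reg_r (D * D)); [lra|]; field_simplify; lra.
  - unfold D, det3; field; exact HD.
  - destruct S; unfold D, det3 in *; simpl; f_equal; field; exact HD.
Qed.

Lemma wedged_intro (A B C X Y P Q S : pt) :
  equilateral P Q S -> on_seg X Y P -> on_seg X Y Q ->
  (forall M, on_seg X Y M -> in_tri A B C M) -> in_tri A B C S ->
  wedged A B C X Y P Q S.
Proof.
  intros He HP HQ Hseg HS. split; [exact He | split].
  - intros M. apply in_tri_convex; auto.
  - intros M. apply on_seg_convex; auto.
Qed.

Lemma is_WET_area_congr (A B C X Y A' B' C' X' Y' : pt) (w : R) :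
  (forall M, in_tri A B C M <-> in_tri A' B' C' M) ->
  (forall M, on_seg X Y M <-> on_seg X' Y' M) ->
  is_WET_area A B C X Y w -> is_WET_area A' B' C' X' Y' w.
Proof.
  intros Ht Hs.
  assert (Hw : forall P Q S, wedged A B C X Y P Q S <-> wedged A' B' C' X' Y' P Q S).
  { intros P Q S. split; intros [He [HT HS]]; (split; [exact He | split]); intros M HM;
      [apply Ht, HT | apply Hs, HS | apply Ht, HT | apply Hs, HS]; exact HM. }
  intros [(P & Q & S & HW & Harea) Hmax]. split.
  - exists P, Q, S. split; [apply Hw, HW | exact Harea].
  - intros P' Q' S' HW'. apply Hmax, Hw, HW'.
Qed.

Lemma sqdist_pt_on (O Y : pt) (p q : R) :
  sqdist (pt_on O Y p) (pt_on O Y q) = (q - p) ^ 2 * sqdist O Y.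
Proof. unfold sqdist, pt_on; simpl; ring. Qed.

Lemma det3_apex_on_base (O Y : pt) (p q k : R) :
  det3 O Y (apex (pt_on O Y p) (pt_on O Y q) k) = k * (q - p) * sqdist O Y.
Proof. unfold det3, apex, pt_on, sqdist; simpl; field. Qed.

Lemma det3_apex_on_side (O Y Z : pt) (p q k : R) :
  det3 O (apex (pt_on O Y p) (pt_on O Y q) k) Z =
  (p + q) / 2 * det3 O Y Z - k * (q - p) * dot3 O Y Z.
Proof. unfold det3, dot3, apex, pt_on; simpl; field. Qed.

(* [D], [g], [L] stand for [det3 O Y Z], [dot3 O Y Z] and [sqdist O Y]; the two sign
   hypotheses are those of [det3 O Y S] and [det3 O S Z] for the apex [S]. *)
Lemma base_ratio_bound (p q k D g L : R) :
  0 <= p <= 1 -> 0 <= q <= 1 -> k * k = 3 / 4 -> 0 < L -> D <> 0 ->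
  0 <= k * (q - p) * L * D -> 0 <= ((p + q) / 2 * D - k * (q - p) * g) * D ->
  Rabs (q - p) * (Rabs D + sqrt 3 * g) <= 2 * Rabs D.
Proof.
  intros Hp Hq Hk HL HD Hw Hv.
  assert (HnD : 0 <= k * (q - p) * D).
  { replace (k * (q - p) * L * D) with (k * (q - p) * D * L) in Hw by ring.
    apply (Rmult_le_reg_r L); [exact HL|]. rewrite Rmult_0_l. exact Hw. }
  assert (EnD : k * (q - p) * D = sqrt 3 / 2 * Rabs (q - p) * Rabs D).
  { rewrite <- (Rabs_pos_eq _ HnD), !Rabs_mult, (Rabs_half_sqrt3 k Hk). ring. }
  assert (Hmid : (p + q) / 2 <= 1 - Rabs (q - p) / 2).
  { unfold Rabs; destruct (Rcase_abs (q - p)); lra. }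
  pose proof (Rabs_pos_lt D HD) as Ha. pose proof (Rabs_sqr_eq D) as EDD.
  pose proof (Rabs_pos (q - p)).
  replace (((p + q) / 2 * D - k * (q - p) * g) * D)
    with ((p + q) / 2 * (Rabs D * Rabs D) - sqrt 3 / 2 * Rabs (q - p) * Rabs D * g) in Hv
    by (rewrite EDD, <- EnD; ring).
  assert (Rabs D * ((1 - Rabs (q - p) / 2) * Rabs D - sqrt 3 / 2 * Rabs (q - p) * g) >= 0)
    by nra.
  assert ((1 - Rabs (q - p) / 2) * Rabs D - sqrt 3 / 2 * Rabs (q - p) * g >= 0) by nra.
  lra.
Qed.

Lemma wedged_side_bound (O Y Z P Q S : pt) :
  det3 O Y Z <> 0 -> wedged O Y Z O Y P Q S ->
  exists r, 0 <= r <= 1 /\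
    r * (Rabs (det3 O Y Z) + sqrt 3 * dot3 O Y Z) <= 2 * Rabs (det3 O Y Z) /\
    area P Q S = sqrt 3 / 4 * (r ^ 2 * sqdist O Y).
Proof.
  intros HD [He [Htri Hseg]].
  pose proof (Htri S (in_tri_third P Q S)) as HS.
  rewrite (area_equilateral P Q S He).
  destruct (Hseg P (on_seg_left P Q)) as [p [Hp EP]].
  destruct (Hseg Q (on_seg_right P Q)) as [q [Hq EQ]].
  fold (pt_on O Y p) in EP; fold (pt_on O Y q) in EQ. subst P Q.
  destruct (equilateral_apex _ _ S He) as [k [Hk ->]].
  pose proof (in_tri_det3 O Y Z _ HS) as Hw.
  apply (in_tri_rotate O Y Z), (in_tri_rotate Y Z O), in_tri_det3 in HS.
  rewrite <- (det3_rotate Z O _), <- (det3_rotate Z O Y) in HS.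
  rewrite det3_apex_on_base in Hw. rewrite det3_apex_on_side in HS.
  exists (Rabs (q - p)). repeat split.
  - apply Rabs_pos.
  - unfold Rabs; destruct (Rcase_abs (q - p)); lra.
  - exact (base_ratio_bound p q k _ _ _ Hp Hq Hk (sqdist_pos_of_det3 O Y Z HD) HD Hw HS).
  - rewrite sqdist_pt_on, pow2_abs. reflexivity.
Qed.

Lemma orientation_factor (D : R) :
  exists k, k * k = 3 / 4 /\ k * D = sqrt 3 / 2 * Rabs D.
Proof.
  pose proof sqrt3_sqr. destruct (Rle_or_lt 0 D).
  - exists (sqrt 3 / 2). rewrite Rabs_pos_eq by assumption. split; [nra | ring].
  - exists (- (sqrt 3 / 2)). rewrite Rabs_left by assumption. split; [nra | ring].
Qed.

Lemma wedged_pt_on (O Y Z : pt) (p q : R) :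
  det3 O Y Z <> 0 -> 0 <= p -> p < q -> q <= 1 ->
  sqrt 3 * (q - p) * dot3 O Y Z <= (p + q) * Rabs (det3 O Y Z) ->
  sqrt 3 * (q - p) * dot3 Y O Z <= (2 - p - q) * Rabs (det3 O Y Z) ->
  exists S, wedged O Y Z O Y (pt_on O Y p) (pt_on O Y q) S.
Proof.
  intros HD Hp Hpq Hq Hv Hu.
  rewrite <- sqdist_sub_dot3 in Hu.
  pose proof (sqdist_pos_of_det3 O Y Z HD) as HL.
  set (D := det3 O Y Z) in *. set (g := dot3 O Y Z) in *. set (L := sqdist O Y) in *.
  pose proof (Rabs_pos_lt D HD) as Ha. pose proof (Rabs_sqr_eq D) as EDD.
  pose proof sqrt3_pos.
  destruct (orientation_factor D) as [k [Hk HkD]].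
  set (S := apex (pt_on O Y p) (pt_on O Y q) k).
  assert (Hne : pt_on O Y p <> pt_on O Y q).
  { intros E. pose proof (sqdist_pt_on O Y p q) as Sq.
    rewrite E in Sq. unfold sqdist at 1 in Sq. ring_simplify in Sq.
    assert (0 < (q - p) ^ 2) by (apply pow_lt; lra). fold L in Sq. nra. }
  assert (Hw : det3 O Y S * D = sqrt 3 / 2 * (q - p) * L * Rabs D).
  { unfold S. rewrite det3_apex_on_base. fold L.
    transitivity ((k * D) * (q - p) * L); [ring | rewrite HkD; ring]. }
  assert (Hv' : det3 O S Z * D = Rabs D / 2 * ((p + q) * Rabs D - sqrt 3 * (q - p) * g)).
  { unfold S. rewrite det3_apex_on_side. fold D g.
    transitivity ((p + q) / 2 * (D * D) - (k * D) * (q - p) * g); [ring|].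
    rewrite <- EDD, HkD. field. }
  assert (Hu' : det3 S Y Z * D =
                Rabs D / 2 * ((2 - p - q) * Rabs D - sqrt 3 * (q - p) * (L - g))).
  { rewrite (det3_split O), Rmult_minus_distr_r, Rmult_minus_distr_r, Hw, Hv'.
    fold D. rewrite <- EDD. field. }
  exists S. apply wedged_intro.
  - exact (apex_equilateral _ _ k Hne Hk).
  - exists p; split; [lra | reflexivity].
  - exists q; split; [lra | reflexivity].
  - intros M. apply in_tri_of_on_seg.
  - apply in_tri_of_det3; fold D; [exact HD | rewrite Hu' | rewrite Hv' | rewrite Hw];
      repeat apply Rmult_le_pos; lra.
Qed.

Lemma is_WET_area_full (O Y Z : pt) :
  det3 O Y Z <> 0 ->
  sqrt 3 * dot3 O Y Z <= Rabs (det3 O Y Z) -> sqrt 3 * dot3 Y O Z <= Rabs (det3 O Y Z) ->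
  is_WET_area O Y Z O Y (sqrt 3 / 4 * sqdist O Y).
Proof.
  intros HD HO HY. split.
  - destruct (wedged_pt_on O Y Z 0 1 HD) as [S HS]; try lra.
    exists (pt_on O Y 0), (pt_on O Y 1), S. split; [exact HS|].
    rewrite (area_equilateral _ _ _ (proj1 HS)), sqdist_pt_on. ring.
  - intros P Q S HW. destruct (wedged_side_bound O Y Z P Q S HD HW) as [r [Hr [_ ->]]].
    pose proof sqrt3_pos. pose proof (sqdist_ge0 O Y).
    apply Rmult_le_compat_l; [lra|]. rewrite <- (Rmult_1_l (sqdist O Y)) at 2.
    apply Rmult_le_compat_r; [lra|]. nra.
Qed.

(* When the angle at O is at most 60 degrees and the angle at Y at least 60 degrees,
   the WET on OY has a vertex at Y and its apex on OZ, and its side is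
   [corner_ratio O Y Z] times |OY|. *)
Definition corner_ratio (O Y Z : pt) : R :=
  2 * Rabs (det3 O Y Z) / (Rabs (det3 O Y Z) + sqrt 3 * dot3 O Y Z).

Lemma corner_ratio_pos (O Y Z : pt) : det3 O Y Z <> 0 ->
  Rabs (det3 O Y Z) <= sqrt 3 * dot3 O Y Z -> 0 < corner_ratio O Y Z.
Proof.
  intros HD H. pose proof (Rabs_pos_lt _ HD). pose proof sqrt3_pos.
  unfold corner_ratio. apply Rdiv_lt_0_compat; lra.
Qed.

Lemma corner_ratio_swap (O Y Z : pt) : corner_ratio O Z Y = corner_ratio O Y Z.
Proof. unfold corner_ratio. rewrite det3_swap, Rabs_Ropp, dot3_swap. reflexivity. Qed.

Lemma is_WET_area_corner (O Y Z : pt) :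
  det3 O Y Z <> 0 ->
  Rabs (det3 O Y Z) <= sqrt 3 * dot3 O Y Z -> sqrt 3 * dot3 Y O Z <= Rabs (det3 O Y Z) ->
  is_WET_area O Y Z O Y (sqrt 3 / 4 * (corner_ratio O Y Z ^ 2 * sqdist O Y)).
Proof.
  intros HD HO HY.
  pose proof (Rabs_pos_lt _ HD). pose proof sqrt3_pos.
  pose proof (corner_ratio_pos O Y Z HD HO) as Ht0.
  set (t := corner_ratio O Y Z) in *.
  assert (Ht : t * (Rabs (det3 O Y Z) + sqrt 3 * dot3 O Y Z) = 2 * Rabs (det3 O Y Z))
    by (unfold t, corner_ratio; field; lra).
  assert (Ht1 : t <= 1) by nra.
  split.
  - destruct (wedged_pt_on O Y Z (1 - t) 1 HD) as [S HS]; try lra; try nra.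
    exists (pt_on O Y (1 - t)), (pt_on O Y 1), S. split; [exact HS|].
    rewrite (area_equilateral _ _ _ (proj1 HS)), sqdist_pt_on. do 2 f_equal. ring.
  - intros P Q S HW. destruct (wedged_side_bound O Y Z P Q S HD HW) as [r [Hr [Hrt ->]]].
    pose proof (sqdist_ge0 O Y).
    assert (r <= t) by nra.
    apply Rmult_le_compat_l; [lra|]. apply Rmult_le_compat_r; [lra|]. nra.
Qed.

Lemma is_WET_area_BC_corner (A B C : pt) :
  det3 A B C <> 0 ->
  Rabs (det3 A B C) <= sqrt 3 * dot3 C A B -> sqrt 3 * dot3 B C A <= Rabs (det3 A B C) ->
  is_WET_area A B C B C (sqrt 3 / 4 * (corner_ratio C A B ^ 2 * sqdist C B)).
Proof.
  intros HD HC HB.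
  assert (ED : det3 C B A = - det3 A B C) by (unfold det3; ring).
  apply (is_WET_area_congr C B A C B).
  - intros M. symmetry. apply in_tri_rev.
  - intros M. apply on_seg_rev.
  - rewrite <- corner_ratio_swap. apply is_WET_area_corner; rewrite ED, ?Rabs_Ropp.
    + lra.
    + rewrite dot3_swap. exact HC.
    + exact HB.
Qed.

Lemma is_WET_area_CA_corner (A B C : pt) :
  det3 A B C <> 0 ->
  Rabs (det3 A B C) <= sqrt 3 * dot3 C A B -> sqrt 3 * dot3 A B C <= Rabs (det3 A B C) ->
  is_WET_area A B C C A (sqrt 3 / 4 * (corner_ratio C A B ^ 2 * sqdist C A)).
Proof.
  intros HD HC HA.
  apply (is_WET_area_congr C A B C A).
  - intros M. rewrite (in_tri_rotate A B C), (in_tri_rotate B C A). reflexivity.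
  - reflexivity.
  - apply is_WET_area_corner; rewrite (det3_rotate2 A B C); [exact HD | exact HC |].
    rewrite dot3_swap. exact HA.
Qed.

Lemma angle_bound (V P Q : pt) : 0 <= angle V P Q <= PI.
Proof. apply acos_bound. Qed.

Lemma pdist_mul_pos (V P Q : pt) : det3 V P Q <> 0 -> 0 < pdist V P * pdist V Q.
Proof.
  intros HD. apply Rmult_lt_0_compat; [exact (pdist_pos_of_det3 V P Q HD)|].
  apply (pdist_pos_of_det3 V Q P). rewrite det3_swap. lra.
Qed.

Lemma cos_sin_angle (V P Q : pt) : det3 V P Q <> 0 ->
  cos (angle V P Q) = dot3 V P Q / (pdist V P * pdist V Q) /\
  sin (angle V P Q) = Rabs (det3 V P Q) / (pdist V P * pdist V Q).
Proof.
  intros HD. pose proof (pdist_mul_pos V P Q HD) as Hm.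
  change (angle V P Q) with (acos (dot3 V P Q / (pdist V P * pdist V Q))).
  set (m := pdist V P * pdist V Q) in *.
  assert (Hmm : m * m = det3 V P Q ^ 2 + dot3 V P Q ^ 2).
  { unfold m. rewrite lagrange_det3_dot3, <- !pdist_sqr. ring. }
  assert (Hpy : 1 - (dot3 V P Q / m)² = (det3 V P Q / m)²).
  { replace 1 with ((det3 V P Q ^ 2 + dot3 V P Q ^ 2) / (m * m))
      by (rewrite <- Hmm; field; lra).
    unfold Rsqr. field. lra. }
  assert (Hb : -1 <= dot3 V P Q / m <= 1).
  { pose proof (Rle_0_sqr (det3 V P Q / m)). unfold Rsqr in *. split; nra. }
  split.
  - exact (cos_acos _ Hb).
  - rewrite sin_acos, Hpy, sqrt_Rsqr_abs by exact Hb.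
    unfold Rdiv. rewrite Rabs_mult, Rabs_inv, (Rabs_pos_eq m); lra.
Qed.

Lemma sin_angle_sub_PI3 (V P Q : pt) : det3 V P Q <> 0 ->
  sin (angle V P Q - PI / 3) * (2 * (pdist V P * pdist V Q)) =
  Rabs (det3 V P Q) - sqrt 3 * dot3 V P Q.
Proof.
  intros HD. pose proof (pdist_mul_pos V P Q HD).
  destruct (cos_sin_angle V P Q HD) as [Hc Hs].
  rewrite sin_minus, Hc, Hs, sin_PI3, cos_PI3.
  set (m := pdist V P * pdist V Q) in *. field. lra.
Qed.

Lemma angle_ge_PI3 (V P Q : pt) : det3 V P Q <> 0 ->
  PI / 3 <= angle V P Q -> sqrt 3 * dot3 V P Q <= Rabs (det3 V P Q).
Proof.
  intros HD H. pose proof (pdist_mul_pos V P Q HD). pose proof (angle_bound V P Q).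
  assert (0 <= sin (angle V P Q - PI / 3)) by (apply sin_ge_0; lra).
  pose proof (sin_angle_sub_PI3 V P Q HD). nra.
Qed.

Lemma angle_le_PI3 (V P Q : pt) : det3 V P Q <> 0 ->
  angle V P Q <= PI / 3 -> Rabs (det3 V P Q) <= sqrt 3 * dot3 V P Q.
Proof.
  intros HD H. pose proof (pdist_mul_pos V P Q HD). pose proof (angle_bound V P Q).
  assert (Hs : 0 <= sin (- (angle V P Q - PI / 3))) by (apply sin_ge_0; lra).
  rewrite sin_neg in Hs. pose proof (sin_angle_sub_PI3 V P Q HD). nra.
Qed.

Lemma sin_angle_pos (V P Q : pt) : det3 V P Q <> 0 -> 0 < sin (angle V P Q).
Proof.
  intros HD. rewrite (proj2 (cos_sin_angle V P Q HD)).
  apply Rdiv_lt_0_compat; [apply Rabs_pos_lt, HD | apply pdist_mul_pos, HD].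
Qed.

Lemma angle_lt_PI (V P Q : pt) : det3 V P Q <> 0 -> angle V P Q < PI.
Proof.
  intros HD. pose proof (sin_angle_pos V P Q HD).
  destruct (Rle_lt_or_eq_dec _ _ (proj2 (angle_bound V P Q))) as [|E]; [assumption|].
  rewrite E, sin_PI in *. lra.
Qed.

Lemma cos_sin_angle_add (A B C : pt) : det3 A B C <> 0 ->
  cos (angle A B C + angle B C A) = - cos (angle C A B) /\
  sin (angle A B C + angle B C A) = sin (angle C A B).
Proof.
  intros HD.
  assert (HB : det3 B C A <> 0) by (rewrite (det3_rotate A B C); exact HD).
  assert (HC : det3 C A B <> 0) by (rewrite (det3_rotate2 A B C); exact HD).
  destruct (cos_sin_angle A B C HD) as [cA sA].
  destruct (cos_sin_angle B C A HB) as [cB sB].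
  destruct (cos_sin_angle C A B HC) as [cC sC].
  pose proof (pdist_pos_of_det3 A B C HD) as Hc.
  pose proof (pdist_pos_of_det3 B C A HB) as Ha.
  pose proof (pdist_pos_of_det3 C A B HC) as Hb.
  rewrite cos_plus, sin_plus, cA, sA, cB, sB, cC, sC, (det3_rotate A B C), (det3_rotate2 A B C).
  rewrite (pdist_sym B A), (pdist_sym A C), (pdist_sym C B).
  assert (Ecos : dot3 A B C * dot3 B C A - det3 A B C * det3 A B C =
                 - (dot3 C A B * sqdist A B))
    by (unfold dot3, det3, sqdist; ring).
  assert (Esin : dot3 B C A + dot3 A B C = sqdist A B) by (unfold dot3, sqdist; ring).
  rewrite <- (pdist_sqr A B) in Ecos, Esin. rewrite <- Rabs_sqr_eq in Ecos.
  set (a := pdist B C) in *; set (b := pdist C A) in *; set (c := pdist A B) in *.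
  set (d := Rabs (det3 A B C)) in *.
  split.
  - transitivity ((dot3 A B C * dot3 B C A - d * d) / (a * b * (c * c)));
      [field | rewrite Ecos; field]; lra.
  - transitivity (d * (dot3 B C A + dot3 A B C) / (a * b * (c * c)));
      [field | rewrite Esin; field]; lra.
Qed.

Lemma angle_sum (A B C : pt) : det3 A B C <> 0 ->
  angle A B C + angle B C A + angle C A B = PI.
Proof.
  intros HD.
  assert (HB : det3 B C A <> 0) by (rewrite (det3_rotate A B C); exact HD).
  assert (HC : det3 C A B <> 0) by (rewrite (det3_rotate2 A B C); exact HD).
  destruct (cos_sin_angle_add A B C HD) as [Ec Es].
  pose proof (sin_angle_pos C A B HC).
  pose proof (angle_lt_PI A B C HD). pose proof (angle_lt_PI B C A HB).
  pose proof (angle_bound A B C). pose proof (angle_bound B C A). pose proof (angle_bound C A B).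
  assert (Hle : angle A B C + angle B C A <= PI).
  { destruct (Rle_or_lt (angle A B C + angle B C A) PI) as [|Hgt]; [assumption|].
    pose proof (sin_lt_0 _ Hgt ltac:(lra)). lra. }
  assert (Epi : cos (angle A B C + angle B C A) = cos (PI - angle C A B))
    by (rewrite Ec, cos_minus, cos_PI, sin_PI; ring).
  apply (f_equal acos) in Epi. rewrite !acos_cos in Epi by lra. lra.
Qed.

Lemma sin_le_sin_add_PI3 (a b c : R) :
  a + b + c = PI -> 0 <= a -> PI / 3 <= b <= PI -> a + b / 2 <= 2 * PI / 3 ->
  sin a <= sin (c + PI / 3).
Proof.
  intros Hsum Ha Hb Hab. pose proof PI_RGT_0.
  assert (0 <= cos ((c + PI / 3 + a) / 2)) by (apply cos_ge_0; lra).
  assert (0 <= sin ((c + PI / 3 - a) / 2)) by (apply sin_ge_0; lra).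
  pose proof (form4 (c + PI / 3) a). nra.
Qed.

(* By the sine and cosine formulas at A and C, [sin (angle A B C) <= sin (angle C A B + PI / 3)]
   reads [2 |BC| |D| <= |AB| (|D| + sqrt 3 * dot3 C A B)]. *)
Lemma corner_ratio_le (A B C : pt) : det3 A B C <> 0 ->
  sin (angle A B C) <= sin (angle C A B + PI / 3) ->
  corner_ratio C A B * pdist C B <= pdist A B.
Proof.
  intros HD H.
  assert (HC : det3 C A B <> 0) by (rewrite (det3_rotate2 A B C); exact HD).
  destruct (cos_sin_angle A B C HD) as [_ sA].
  destruct (cos_sin_angle C A B HC) as [cC sC].
  pose proof (pdist_pos_of_det3 A B C HD) as Hc.
  pose proof (pdist_pos_of_det3 C A B HC) as Hb.
  assert (Ha : 0 < pdist C B) by (apply (pdist_pos_of_det3 C B A); rewrite det3_swap; lra).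
  pose proof (Rabs_pos_lt _ HD).
  rewrite sin_plus, sA, cC, sC, sin_PI3, cos_PI3, (det3_rotate2 A B C), (pdist_sym A C) in H.
  unfold corner_ratio. rewrite (det3_rotate2 A B C).
  set (a := pdist C B) in *; set (b := pdist C A) in *; set (c := pdist A B) in *.
  set (d := Rabs (det3 A B C)) in *; set (g := dot3 C A B) in *.
  assert (Hk : 2 * a * d <= c * (d + sqrt 3 * g)).
  { apply (Rmult_le_compat_r (2 * a * b * c)) in H;
      [|left; repeat apply Rmult_lt_0_compat; lra].
    replace (d / (c * b) * (2 * a * b * c)) with (2 * a * d) in H by (field; lra).
    replace ((d / (b * a) * (1 / 2) + g / (b * a) * (sqrt 3 / 2)) * (2 * a * b * c))
      with (c * (d + sqrt 3 * g)) in H by (field; lra).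
    exact H. }
  assert (Hden : 0 < d + sqrt 3 * g) by nra.
  apply (Rmult_le_reg_r (d + sqrt 3 * g)); [exact Hden|].
  replace (2 * d / (d + sqrt 3 * g) * a * (d + sqrt 3 * g)) with (2 * a * d) by (field; lra).
  exact Hk.
Qed.

Theorem mainTheorem2 (A B C : pt) :
  det3 A B C <> 0 ->
  pdist B C > pdist C A -> pdist C A > pdist A B ->
  PI / 3 <= angle B C A -> angle B C A < 4 * PI / 9 ->
  PI / 3 < angle A B C -> angle A B C < PI / 2 ->
  angle A B C + angle B C A / 2 < 2 * PI / 3 ->
  exists Wa Wb Wc : R,
    is_WET_area A B C B C Wa /\
    is_WET_area A B C C A Wb /\
    is_WET_area A B C A B Wc /\
    Wa <= Wc /\ Wb <= Wc /\
    Wb <= Wa.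
Proof.
  intros HD Hab _ Hb1 _ Ha1 _ Hsum.
  assert (HB : det3 B C A <> 0) by (rewrite (det3_rotate A B C); exact HD).
  assert (HC : det3 C A B <> 0) by (rewrite (det3_rotate2 A B C); exact HD).
  pose proof (angle_sum A B C HD) as Hpi.
  pose proof (angle_bound A B C). pose proof (angle_bound B C A).
  pose proof (angle_ge_PI3 A B C HD ltac:(lra)) as HA.
  pose proof (angle_ge_PI3 B C A HB Hb1) as HgeB. rewrite (det3_rotate A B C) in HgeB.
  pose proof (angle_le_PI3 C A B HC ltac:(lra)) as HleC.
  pose proof (corner_ratio_pos C A B HC HleC) as Ht.
  rewrite (det3_rotate2 A B C) in HleC.
  pose proof (corner_ratio_le A B C HD
    (sin_le_sin_add_PI3 _ _ _ Hpi ltac:(lra) ltac:(lra) ltac:(lra))) as Hac.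
  set (t := corner_ratio C A B) in *.
  exists (sqrt 3 / 4 * (t ^ 2 * sqdist C B)), (sqrt 3 / 4 * (t ^ 2 * sqdist C A)),
    (sqrt 3 / 4 * sqdist A B).
  apply sqdist_le_scaled in Hac; [|lra].
  assert (Hba : sqdist C A <= sqdist C B).
  { rewrite <- (Rmult_1_l (sqdist C A)), <- (pow1 2).
    apply sqdist_le_scaled; rewrite ?(pdist_sym C B); lra. }
  pose proof sqrt3_pos. pose proof (pow2_ge_0 t).
  split; [|split; [|split; [|split; [|split]]]]; try (apply Rmult_le_compat_l; nra).
  - apply is_WET_area_BC_corner; assumption.
  - apply is_WET_area_CA_corner; assumption.
  - apply is_WET_area_full; [exact HD | exact HA | rewrite dot3_swap; exact HgeB].
Qed.
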